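(* Let $S\subset\mathbb{R}^n$ be a set of positive Lebesgue measure and let $P,Q$ be two matrix-valued polynomials on $\mathbb{R}^n$. Suppose that there exists $s$ such that $\operatorname{rank}P(\xi)+\operatorname{rank}Q(\xi)=s$ for all $\xi\in S$. Then both $P$ and $Q$ have constant rank on $S$, i.e. $\xi\mapsto\operatorname{rank}P(\xi)$ and $\xi\mapsto\operatorname{rank}Q(\xi)$ are constant on $S$.
   Context: A matrix-valued polynomial on $\mathbb{R}^n$ is a map $\mathbb{R}^n\to\mathbb{R}^{N\times m}$ each of whose entries is a polynomial in $\xi\in\mathbb{R}^n$. *)

From HB Require Import structures.
From mathcomp Require Import all_boot all_order all_algebra.
From mathcomp Require Import all_classical all_reals all_analysis.
From mathcomp Require mpoly.
Set Implicit Arguments. Unset Strict Implicit. Unset Printing Implicit Defensive.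
Import Order.TTheory GRing.Theory Num.Theory.
Local Open Scope classical_set_scope.
Local Open Scope ring_scope.

Definition box (R : realType) (n : nat) (a b : 'rV[R]_n) : set 'rV[R]_n :=
  [set x | forall i : 'I_n, a ord0 i <= x ord0 i <= b ord0 i].

Definition box_vol (R : realType) (n : nat) (a b : 'rV[R]_n) : R :=
  \prod_(i < n) (b ord0 i - a ord0 i).

(* Lebesgue outer measure on R^n: infimum of the total volume of countable
   covers by closed boxes.  For Lebesgue measurable sets it is the Lebesgue
   measure. *)
Definition lebesgue_outer (R : realType) (n : nat) (S : set 'rV[R]_n) : \bar R :=
  ereal_inf [set v : \bar R | exists a b : nat -> 'rV[R]_n,
     [/\ (forall k (i : 'I_n), a k ord0 i <= b k ord0 i),
         S `<=` \bigcup_k box (a k) (b k) &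
         v = (\sum_(0 <= k <oo) (box_vol (a k) (b k))%:E)%E]].

Definition polymx_eval (R : realType) (n N m : nat)
    (P : 'M[mpoly.mpoly n R]_(N, m)) (xi : 'rV[R]_n) : 'M[R]_(N, m) :=
  map_mx (mpoly.meval (fun i : 'I_n => xi ord0 i)) P.

Definition polymx_rank (R : realType) (n N m : nat)
    (P : 'M[mpoly.mpoly n R]_(N, m)) (xi : 'rV[R]_n) : nat :=
  \rank (polymx_eval P xi).

From HB Require Import structures.
From mathcomp Require Import all_boot all_order all_algebra.
From mathcomp Require Import all_classical all_reals all_analysis.
From mathcomp Require mpoly.
From mathcomp Require Import perm ring lra zify.
Set Implicit Arguments. Unset Strict Implicit. Unset Printing Implicit Defensive.
Import Order.TTheory GRing.Theory Num.Theory.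
Local Open Scope classical_set_scope.
Local Open Scope ring_scope.

(* The rank of a matrix is the largest size of a nonvanishing minor, and the
   minors of P(xi) are polynomial functions of xi.  Let rP and rQ be the
   largest ranks of P and Q on S, reached at xiP and xiQ, and pick minors DP,
   DQ of these sizes with DP(xiP) <> 0 and DQ(xiQ) <> 0.  The zero set of a
   polynomial function that is not identically zero is Lebesgue-null, so the
   non-null set S contains a point xi1 with DP(xi1) <> 0 and DQ(xi1) <> 0.
   There both ranks are maximal, hence s = rP + rQ, and the bounds
   rank P <= rP, rank Q <= rQ force equality on all of S.

   Nullity of {f = 0} goes by induction on the degree of f.  If every partial
   derivative of f vanishes identically, f is constant.  Otherwise
   {f = 0} is contained in {d_i f = 0} together with the sets
   {|x| <= m, f x = 0, |d_i f x| >= 1/(m+1)}; on each cell of a fine grid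
   meeting the latter, |d_i f| stays bounded below, so the zero set is a
   Lipschitz graph over the other coordinates, which is covered by boxes of
   total volume O(mesh). *)

Lemma exists_nat_ge {R : realType} (X : R) : exists m : nat, X <= m%:R.
Proof.
have [X_le0|X_gt0] := lerP X 0; first by exists 0%N.
by exists (Num.Def.archi_bound X); apply/ltW/archi_boundP/ltW.
Qed.

Lemma exists_nat_div_le {R : realType} (X eps : R) :
  0 < eps -> exists K : nat, (0 < K)%N /\ X / K%:R <= eps.
Proof.
move=> eps_gt0; have [m Xm] := exists_nat_ge (X / eps); exists m.+1; split => //.
by rewrite ler_pdivrMr ?ltr0n // mulrC -ler_pdivrMr // (le_trans Xm) // ler_nat.
Qed.

Lemma interval_grid_cell {R : realType} (q s x : R) (K : nat) :
  0 < s -> (0 < K)%N -> q <= x <= q + s ->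
  exists k : 'I_K, q + k%:R * (s / K%:R) <= x <= q + k.+1%:R * (s / K%:R).
Proof.
move=> s_gt0 K_gt0 /andP[qx xqs]; set h := s / K%:R.
have K_gt0' : 0 < K%:R :> R by rewrite ltr0n.
have h_gt0 : 0 < h by rewrite divr_gt0.
pose t := (x - q) / h.
have t_ge0 : 0 <= t by rewrite divr_ge0 ?subr_ge0 // ltW.
have tK : t <= K%:R.
  by rewrite ler_pdivrMr // /h mulrCA divff ?mulr1 ?lerBlDl // gt_eqF.
have xE : x = q + t * h by rewrite /t divfK ?gt_eqF // addrC subrK.
have /andP[trunc_le trunc_gt] := truncn_itv t_ge0.
(* The index is [floor t], capped at [K - 1] for the right end point [x = q + s]. *)
have kK : (minn (Num.trunc t) K.-1 < K)%N by rewrite gtn_min prednK // leqnn orbT.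
exists (Ordinal kK); rewrite xE /= !lerD2l !ler_pM2r //; apply/andP; split.
  by apply: le_trans trunc_le; rewrite ler_nat geq_minl.
by have [_|_] := leqP (Num.trunc t) K.-1; [exact: ltW | rewrite prednK].
Qed.

Lemma exists_common_bound {R : realType} m (P : 'I_m -> R -> Prop) :
  (forall j B B', B <= B' -> P j B -> P j B') -> (forall j, exists B, P j B) ->
  exists B, forall j, P j B.
Proof.
move=> Pmono /fin_all_exists[B PB]; exists (\sum_j `|B j|) => j; apply: Pmono (PB j).
by rewrite (le_trans (ler_norm _)) // (bigD1 j) //= lerDl sumr_ge0.
Qed.

Section NullSets.
Context {R : realType} {n : nat}.
Implicit Types A B : set 'rV[R]_n.

Definition boxes_cover A (a b : nat -> 'rV[R]_n) (eps : R) :=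
  [/\ forall k i, a k ord0 i <= b k ord0 i,
      A `<=` \bigcup_k box (a k) (b k) &
      forall N, \sum_(k < N) box_vol (a k) (b k) <= eps].

Definition lebesgue_null A :=
  forall eps : R, 0 < eps -> exists a b, boxes_cover A a b eps.

Lemma box_vol_ge0 (a b : 'rV[R]_n) : (forall i, a ord0 i <= b ord0 i) -> 0 <= box_vol a b.
Proof. by move=> ab; apply: prodr_ge0 => i _; rewrite subr_ge0. Qed.

Lemma lebesgue_outer_le_cover A a b eps :
  boxes_cover A a b eps -> (lebesgue_outer A <= eps%:E)%E.
Proof.
move=> [ab Acov vol_le].
apply: (@le_trans _ _ (\sum_(0 <= k <oo) (box_vol (a k) (b k))%:E)%E).
  by apply: ereal_inf_lbound; exists a, b.
apply: lime_le; first by apply: is_cvg_nneseries => k _ _; rewrite lee_fin box_vol_ge0.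
by apply: nearW => N; rewrite /= sumEFin lee_fin big_mkord.
Qed.

Lemma lebesgue_null_outer A : lebesgue_null A -> (lebesgue_outer A <= 0)%E.
Proof.
move=> nullA; apply/lee_addgt0Pr => e e_gt0; rewrite add0e.
by have [a [b cov]] := nullA e e_gt0; apply: lebesgue_outer_le_cover cov.
Qed.

Lemma lebesgue_nullS A B : A `<=` B -> lebesgue_null B -> lebesgue_null A.
Proof.
move=> AB nullB eps eps_gt0; have [a [b [ab Bcov vol_le]]] := nullB eps eps_gt0.
by exists a, b; split => // x /AB /Bcov.
Qed.

Lemma ler_sum_inj (I J : finType) (P : pred I) (h : I -> J) (F : J -> R) :
  {in P &, injective h} -> (forall j, 0 <= F j) ->
  \sum_(i | P i) F (h i) <= \sum_j F j.
Proof.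
move=> h_inj F_ge0; rewrite -(big_imset _ h_inj) [leRHS](bigID (mem (h @: P))) /=.
by rewrite lerDl sumr_ge0.
Qed.

Lemma ler_sum_pickle_pairs (I : countType) (v : I -> nat -> R) (e : nat -> R) N :
  (forall i j, 0 <= v i j) -> (forall p, 0 <= e p) ->
  (forall i M, \sum_(j < M) v i j <= e (pickle i)) ->
  exists P, \sum_(k < N) oapp (fun ij => v ij.1 ij.2) 0 (@pickle_inv (I * nat)%type k)
              <= \sum_(p < P) e p.
Proof.
move=> v_ge0 e_ge0 v_le.
pose bound k := oapp (fun ij => maxn (pickle ij.1) ij.2) 0%N (@pickle_inv (I * nat)%type k).
pose P := (\max_(k < N) bound k).+1; exists P.
pose h (k : 'I_N) : 'I_P * 'I_P :=
  oapp (fun ij => (inord (pickle ij.1), inord ij.2)) (ord0, ord0)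
    (@pickle_inv (I * nat)%type k).
pose F (p j : 'I_P) := oapp (fun i => v i j) 0 (@pickle_inv I p).
have F_ge0 (pj : 'I_P * 'I_P) : 0 <= F pj.1 pj.2 by rewrite /F; case: pickle_inv => /=.
have h_val (k : 'I_N) (i : I) (j : nat) : pickle_inv k = Some (i, j) ->
    (h k).1 = pickle i :> nat /\ (h k).2 = j :> nat.
  move=> kE; have : (bound k < P)%N by rewrite ltnS (leq_bigmax_cond k).
  by rewrite /h /bound kE gtn_max /= => /andP[iP jP]; rewrite !inordK.
have h_inj : {in (fun k : 'I_N => @pickle_inv (I * nat)%type k != None) &, injective h}.
  move=> k k'; rewrite !unfold_in.
  case kE: pickle_inv => [[i j]|] // _; case k'E: pickle_inv => [[i' j']|] // _ hkk'.
  have [hk1 hk2] := h_val k i j kE; have [hk1' hk2'] := h_val k' i' j' k'E.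
  have [ii' jj'] : pickle i = pickle i' /\ j = j' by rewrite -hk1 -hk1' -hk2 -hk2' hkk'.
  have pairK := @pickle_invK (I * nat)%type.
  apply/val_inj; rewrite /= -[val k]pairK -[val k']pairK kE k'E /=.
  by rewrite (pcan_inj pickleK ii') jj'.
have vE (k : 'I_N) : oapp (fun ij => v ij.1 ij.2) 0 (@pickle_inv (I * nat)%type k) =
    if @pickle_inv (I * nat)%type k != None then F (h k).1 (h k).2 else 0.
  case kE: pickle_inv => [[i j]|] //.
  by have [hk1 hk2] := h_val k i j kE; rewrite /= /F hk1 hk2 pickleK_inv.
rewrite (eq_bigr _ (fun k _ => vE k)) -big_mkcond /=.
apply: le_trans (ler_sum_inj h_inj F_ge0) _.
rewrite -pair_bigA /=; apply: ler_sum => p _; rewrite /F /=.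
case pE: (@pickle_inv I p) => [i|]; last by rewrite big1.
by rewrite -[nat_of_ord p](@pickle_invK I) pE; apply: v_le.
Qed.

Lemma ler_sum_geometric_half (eps : R) P : 0 <= eps ->
  \sum_(p < P) geometric (eps / 2) 2^-1 p <= eps.
Proof.
move=> eps_ge0; have half_gt0 : 0 < 2^-1 :> R by rewrite invr_gt0.
have half_lt1 : `|2^-1 : R| < 1 by rewrite ger0_norm ?invf_lt1 ?ltr1n.
have := geometric_le_lim P (divr_ge0 eps_ge0 (ler0n _ 2)) half_gt0 half_lt1.
have -> : eps / 2 / (1 - 2^-1) = eps by field.
by rewrite /series /= big_mkord.
Qed.

Hypothesis n_gt0 : (0 < n)%N.

Lemma box_vol0 : box_vol (0 : 'rV[R]_n) 0 = 0.
Proof. by rewrite /box_vol (bigD1 (Ordinal n_gt0)) //= !mxE subrr mul0r. Qed.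

Lemma lebesgue_null0 : lebesgue_null set0.
Proof.
move=> eps eps_gt0; exists (fun=> 0), (fun=> 0); split=> [k i||N] //.
by rewrite box_vol0 sumr_const mul0rn ltW.
Qed.

Lemma boxes_cover_fin (I : finType) A (a b : I -> 'rV[R]_n) eps :
  (forall c i, a c ord0 i <= b c ord0 i) ->
  A `<=` \bigcup_c box (a c) (b c) ->
  \sum_c box_vol (a c) (b c) <= eps -> exists a' b', boxes_cover A a' b' eps.
Proof.
move=> ab Acov vol_le.
pose pad (u : I -> 'rV[R]_n) k :=
  if (insub k : option 'I_#|I|) is Some q then u (enum_val q) else 0.
have pad_vol k : 0 <= box_vol (pad a k) (pad b k).
  by apply: box_vol_ge0 => i; rewrite /pad; case: insub => [q|]; rewrite ?mxE.
exists (pad a), (pad b); split.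
- by move=> k i; rewrite /pad; case: insub => [q|]; rewrite ?mxE.
- by move=> x /Acov [c _ xc]; exists (enum_rank c) => //; rewrite /pad valK enum_rankK.
move=> N; rewrite -(big_mkord xpredT (fun k => box_vol (pad a k) (pad b k))).
apply: (@le_trans _ _ (\sum_(0 <= k < #|I| + N) box_vol (pad a k) (pad b k))).
  by rewrite (big_cat_nat (leq0n N) (leq_addl _ _)) /= lerDl sumr_ge0.
rewrite (big_cat_nat (leq0n #|I|) (leq_addr _ _)) /= [X in _ + X]big1_seq.
  rewrite addr0 big_mkord (reindex _ (onW_bij _ (enum_rank_bij I))) /=.
  by under eq_bigr do rewrite /pad valK enum_rankK.
move=> k /andP[_]; rewrite mem_index_iota => /andP[Ik _].
by rewrite /pad insubF ?box_vol0 // ltnNge Ik.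
Qed.

Lemma lebesgue_null_bigcup (I : countType) (A : I -> set 'rV[R]_n) :
  (forall i, lebesgue_null (A i)) -> lebesgue_null (\bigcup_i A i).
Proof.
move=> nullA eps eps_gt0.
(* The [i]-th cover gets the budget [eps / 2^(pickle i + 1)]; all the covers are
   then enumerated along [pickle_inv : nat -> option (I * nat)]. *)
pose e := geometric (eps / 2) 2^-1.
have e_gt0 p : 0 < e p by rewrite mulr_gt0 ?exprn_gt0 ?divr_gt0.
have /choice[ab cov] : forall i, exists ab : (nat -> 'rV[R]_n) * (nat -> 'rV[R]_n),
    boxes_cover (A i) ab.1 ab.2 (e (pickle i)).
  by move=> i; have [a [b ?]] := nullA i _ (e_gt0 (pickle i)); exists (a, b).
pose vol i j := box_vol ((ab i).1 j) ((ab i).2 j).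
pose enum_pairs (c : I -> nat -> 'rV[R]_n) k :=
  oapp (fun ij => c ij.1 ij.2) 0 (@pickle_inv (I * nat)%type k).
pose a := enum_pairs (fun i => (ab i).1); pose b := enum_pairs (fun i => (ab i).2).
exists a, b; split.
- move=> k l; rewrite /a /b /enum_pairs; case: pickle_inv => [[i j]|] /=.
    by have [? _ _] := cov i.
  by rewrite mxE.
- move=> x [i _ Aix]; have [_ /(_ x Aix) [j _ xj] _] := cov i.
  by exists (pickle (i, j)) => //; rewrite /a /b /enum_pairs pickleK_inv.
move=> N; have [|p|i M|P vol_le] := @ler_sum_pickle_pairs I vol e N.
- by move=> i j; have [? _ _] := cov i; apply: box_vol_ge0.
- exact: ltW.
- by have [_ _] := cov i; apply.
apply: le_trans (ler_sum_geometric_half P (ltW eps_gt0)).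
apply: le_trans vol_le; rewrite le_eqVlt; apply/orP; left; apply/eqP.
apply: eq_bigr => k _; rewrite /a /b /enum_pairs; case: pickle_inv => [[i j]|] //=.
exact: box_vol0.
Qed.

Lemma lebesgue_nullU A B : lebesgue_null A -> lebesgue_null B -> lebesgue_null (A `|` B).
Proof.
move=> nullA nullB; apply: (@lebesgue_nullS _ (\bigcup_(c : bool) if c then A else B)).
  by move=> x [Ax|Bx]; [exists true | exists false].
by apply: lebesgue_null_bigcup => -[].
Qed.

End NullSets.

Section PolynomialFunctions.
Context {R : realType} {n : nat}.
Implicit Types (f g : 'rV[R]_n -> R) (x : 'rV[R]_n).

(* [f] is a polynomial function of degree at most [d], in nested Horner form. *)
Fixpoint polyfun (d : nat) f : Prop :=
  if d is d'.+1 then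
    exists c (g : 'I_n -> 'rV[R]_n -> R),
      (forall j, polyfun d' (g j)) /\ forall x, f x = c + \sum_j x ord0 j * g j x
  else exists c, forall x, f x = c.

Lemma polyfun_ext d f g : polyfun d f -> f =1 g -> polyfun d g.
Proof.
case: d => [[c fE] fg|d [c [h [hP fE]]] fg]; first by exists c => x; rewrite -fg.
by exists c, h; split => // x; rewrite -fg.
Qed.

Lemma polyfun_cst d c : polyfun d (fun=> c).
Proof.
elim: d c => [|d IHd] c; first by exists c.
exists c, (fun _ _ => 0); split => [j|x]; first exact: IHd.
by rewrite big1 ?addr0 // => j _; rewrite mulr0.
Qed.

Lemma polyfun_sum_coord d (g : 'I_n -> 'rV[R]_n -> R) : (forall j, polyfun d (g j)) ->
  polyfun d.+1 (fun x => \sum_j x ord0 j * g j x).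
Proof. by move=> gP; exists 0, g; split => // x; rewrite add0r. Qed.

Lemma polyfunS d f : polyfun d f -> polyfun d.+1 f.
Proof.
elim: d f => [|d IHd] f.
  case=> c fE; apply: (polyfun_ext (polyfun_cst 1 c)) => x; by rewrite fE.
by case=> c [g [gP fE]]; exists c, g; split => [j|//]; apply: IHd (gP j).
Qed.

Lemma polyfun_leq d d' f : (d <= d')%N -> polyfun d f -> polyfun d' f.
Proof. by move=> /subnK <-; elim: (d' - d)%N => //= k IHk /IHk /polyfunS. Qed.

Lemma polyfun_add d f g : polyfun d f -> polyfun d g -> polyfun d (fun x => f x + g x).
Proof.
elim: d f g => [|d IHd] f g.
  by case=> c fE [c' gE]; exists (c + c') => x; rewrite fE gE.
case=> c [h [hP fE]] [c' [h' [h'P gE]]].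
exists (c + c'), (fun j x => h j x + h' j x); split => [j|x].
  exact: IHd (hP j) (h'P j).
rewrite fE gE addrACA -big_split /=; congr (_ + _).
by apply: eq_bigr => j _; rewrite mulrDr.
Qed.

Lemma polyfun_scale d a f : polyfun d f -> polyfun d (fun x => a * f x).
Proof.
elim: d f => [|d IHd] f; first by case=> c fE; exists (a * c) => x; rewrite fE.
case=> c [h [hP fE]]; exists (a * c), (fun j x => a * h j x); split => [j|x].
  exact: IHd (hP j).
by rewrite fE mulrDr mulr_sumr; congr (_ + _); apply: eq_bigr => j _; rewrite mulrCA.
Qed.

Lemma polyfun_mul d d' f g :
  polyfun d f -> polyfun d' g -> polyfun (d + d') (fun x => f x * g x).
Proof.
elim: d f => [|d IHd] f.
  by case=> c fE gP; apply: (polyfun_ext (polyfun_scale c gP)) => x; rewrite fE.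
case=> c [h [hP fE]] gP.
have cgP : polyfun (d + d').+1 (fun x => c * g x).
  by apply: polyfun_leq (polyfun_scale c gP); rewrite leqW ?leq_addl.
apply: (polyfun_ext (polyfun_add cgP (polyfun_sum_coord (fun j => IHd _ (hP j) gP)))).
move=> x; rewrite fE mulrDl mulr_suml; congr (_ + _).
by apply: eq_bigr => j _; rewrite mulrA.
Qed.

Lemma polyfun_coord d j : polyfun d.+1 (fun x => x ord0 j).
Proof.
pose delta k : R := if k == j then 1 else 0.
apply: (polyfun_ext (polyfun_sum_coord (fun k => polyfun_cst d (delta k)))) => x.
by rewrite (bigD1 j) //= /delta eqxx mulr1 big1 ?addr0 // => k /negPf ->; rewrite mulr0.
Qed.

Definition is_polyfun f := exists d, polyfun d f.

Lemma is_polyfun_ext f g : is_polyfun f -> f =1 g -> is_polyfun g.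
Proof. by case=> d fP fg; exists d; apply: polyfun_ext fP fg. Qed.

Lemma is_polyfun_cst c : is_polyfun (fun=> c).
Proof. by exists 0%N, c. Qed.

Lemma is_polyfun_coord j : is_polyfun (fun x => x ord0 j).
Proof. by exists 1%N; apply: polyfun_coord. Qed.

Lemma is_polyfun_add f g : is_polyfun f -> is_polyfun g -> is_polyfun (fun x => f x + g x).
Proof.
case=> d fP [d' gP]; exists (d + d')%N.
by apply: polyfun_add; [apply: polyfun_leq fP | apply: polyfun_leq gP];
  rewrite ?leq_addr ?leq_addl.
Qed.

Lemma is_polyfun_mul f g : is_polyfun f -> is_polyfun g -> is_polyfun (fun x => f x * g x).
Proof. by case=> d fP [d' gP]; exists (d + d')%N; apply: polyfun_mul. Qed.

Lemma is_polyfun_sum (I : Type) (r : seq I) (P : pred I) (F : I -> 'rV[R]_n -> R) :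
  (forall i, is_polyfun (F i)) -> is_polyfun (fun x => \sum_(i <- r | P i) F i x).
Proof.
move=> FP; apply: (@is_polyfun_ext (\sum_(i <- r | P i) F i)) => [|x]; last first.
  by rewrite fct_sumE.
apply: (big_ind is_polyfun) => //; first exact: is_polyfun_cst.
exact: is_polyfun_add.
Qed.

Lemma is_polyfun_prod (I : Type) (r : seq I) (P : pred I) (F : I -> 'rV[R]_n -> R) :
  (forall i, is_polyfun (F i)) -> is_polyfun (fun x => \prod_(i <- r | P i) F i x).
Proof.
move=> FP; apply: (@is_polyfun_ext (\prod_(i <- r | P i) F i)) => [|x]; last first.
  by rewrite fct_prodE.
apply: (big_ind is_polyfun) => //; first exact: is_polyfun_cst.
exact: is_polyfun_mul.
Qed.

Lemma is_polyfun_exp f k : is_polyfun f -> is_polyfun (fun x => f x ^+ k).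
Proof.
move=> fP; apply: (@is_polyfun_ext (fun x => \prod_(i < k) f x)) => [|x].
  exact: is_polyfun_prod.
by rewrite prodr_const card_ord.
Qed.

Lemma is_polyfun_meval (p : mpoly.mpoly n R) :
  is_polyfun (fun x => mpoly.meval (fun i => x ord0 i) p).
Proof.
apply: (@is_polyfun_ext (fun x => \sum_(m <- mpoly.msupp p)
    mpoly.mcoeff m p * \prod_i x ord0 i ^+ mpoly.fun_of_multinom m i)); last first.
  by move=> x; rewrite mpoly.mevalE.
apply: is_polyfun_sum => m; apply: is_polyfun_mul; first exact: is_polyfun_cst.
by apply: is_polyfun_prod => i; apply/is_polyfun_exp/is_polyfun_coord.
Qed.

End PolynomialFunctions.

Section PartialDerivatives.
Context {R : realType} {n : nat}.
Implicit Types (f g : 'rV[R]_n -> R) (x y : 'rV[R]_n).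

Definition set_coord x (i : 'I_n) (t : R) : 'rV[R]_n :=
  \row_j (if j == i then t else x ord0 j).

Lemma set_coord_id x i : set_coord x i (x ord0 i) = x.
Proof. by apply/rowP => j; rewrite mxE; case: eqP => // ->. Qed.

Lemma set_coordK x i s t : set_coord (set_coord x i s) i t = set_coord x i t.
Proof. by apply/rowP => j; rewrite !mxE; case: eqP. Qed.

Lemma set_coord_eq x i t : set_coord x i t ord0 i = t.
Proof. by rewrite mxE eqxx. Qed.

Lemma set_coord_neq x i j t : j != i -> set_coord x i t ord0 j = x ord0 j.
Proof. by rewrite mxE => /negPf ->. Qed.

Definition partial_deriv i f (df : 'rV[R]_n -> R) :=
  forall x, is_derive (x ord0 i) 1 (fun t => f (set_coord x i t)) (df x).

Lemma partial_deriv_cst i c : partial_deriv i (fun=> c) (fun=> 0).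
Proof. by move=> x; apply: is_derive_cst. Qed.

Lemma partial_deriv_coord i j :
  partial_deriv i (fun x => x ord0 j) (fun=> if j == i then 1 else 0).
Proof.
move=> x; have [->|ji] := eqVneq j i.
  by under eq_fun do rewrite set_coord_eq; apply: is_derive_id.
by under eq_fun do rewrite set_coord_neq //; apply: is_derive_cst.
Qed.

Lemma partial_deriv_ext i f g df dg :
  partial_deriv i f df -> f =1 g -> df =1 dg -> partial_deriv i g dg.
Proof.
move=> fD fg dfg x; rewrite -dfg; have -> : g = f by apply/funext => y; rewrite fg.
exact: fD.
Qed.

Lemma partial_deriv_horner i c (g dg : 'I_n -> 'rV[R]_n -> R) :
  (forall j, partial_deriv i (g j) (dg j)) ->
  partial_deriv i (fun x => c + \sum_j x ord0 j * g j x)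
                  (fun x => g i x + \sum_j x ord0 j * dg j x).
Proof.
move=> gD x.
have termD j : is_derive (x ord0 i) 1
    (fun t => set_coord x i t ord0 j * g j (set_coord x i t))
    (x ord0 j * dg j x + g j x * (if j == i then 1 else 0)).
  have := is_deriveM (partial_deriv_coord i j x) (gD j x).
  by rewrite set_coord_id.
change (is_derive (x ord0 i) 1
  (fun t => c + \sum_j set_coord x i t ord0 j * g j (set_coord x i t))
  (g i x + \sum_j x ord0 j * dg j x)).
have -> : (fun t => c + \sum_j set_coord x i t ord0 j * g j (set_coord x i t)) =
    cst c + \sum_j (fun t => set_coord x i t ord0 j * g j (set_coord x i t)).
  by apply/funext => t; rewrite /= fct_sumE.
have := is_deriveD (is_derive_cst c (x ord0 i) 1) (is_derive_sum termD).
move=> /is_derive_eq; apply; rewrite add0r big_split /= addrC; congr (_ + _).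
by rewrite (bigD1 i) //= eqxx mulr1 big1 ?addr0 // => j /negPf ->; rewrite mulr0.
Qed.

Lemma polyfun_partial_deriv d f i :
  polyfun d.+1 f -> exists df, polyfun d df /\ partial_deriv i f df.
Proof.
elim: d f => [|d IHd] f [c [g [gP fE]]].
  have [cg gE] : exists cg : 'I_n -> R, forall j x, g j x = cg j.
    by have /fin_all_exists[cg gE] := gP; exists cg.
  exists (g i); split; first exact: gP.
  have gD j : partial_deriv i (g j) (fun=> 0).
    by apply: (partial_deriv_ext (partial_deriv_cst i (cg j))) => // x; rewrite gE.
  apply: (partial_deriv_ext (partial_deriv_horner c gD)) => x; first by rewrite fE.
  by rewrite big1 ?addr0 // => j _; rewrite mulr0.
have {}gP j : polyfun d.+1 (g j) := gP j.
have /fin_all_exists[dg dgP] := fun j => IHd _ (gP j).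
exists (fun x => g i x + \sum_j x ord0 j * dg j x); split.
  exact: polyfun_add (gP i) (polyfun_sum_coord (fun j => (dgP j).1)).
by apply: (partial_deriv_ext (partial_deriv_horner c (fun j => (dgP j).2))).
Qed.

Lemma polyfun_bounded d f (a b : 'rV[R]_n) : polyfun d f ->
  exists B, forall x, box a b x -> `|f x| <= B.
Proof.
elim: d f => [|d IHd] f; first by case=> c fE; exists `|c| => x _; rewrite fE.
case=> c [g [gP fE]]; have /fin_all_exists[B gB] := fun j => IHd _ (gP j).
exists (`|c| + \sum_j (`|a ord0 j| + `|b ord0 j|) * B j) => x xab; rewrite fE.
apply: le_trans (ler_normD _ _) _; rewrite lerD2l.
apply: le_trans (ler_norm_sum _ _ _) _; apply: ler_sum => j _.
rewrite normrM ler_pM ?gB //; have /andP[? ?] := xab j.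
have := ler_norm (- a ord0 j); have := ler_norm (b ord0 j); rewrite normrN => ? ?.
have := normr_ge0 (a ord0 j); have := normr_ge0 (b ord0 j) => ? ?.
by rewrite ler_norml; apply/andP; split; lra.
Qed.

Lemma polyfun_family_bounded m d (g : 'I_m -> 'rV[R]_n -> R) (a b : 'rV[R]_n) :
  (forall j, polyfun d (g j)) -> exists B, forall j x, box a b x -> `|g j x| <= B.
Proof.
move=> gP; apply: exists_common_bound => [j B B' BB' gB x /gB /le_trans|j]; first exact.
exact: polyfun_bounded.
Qed.

Lemma partial_deriv_mvt i f df x t : partial_deriv i f df ->
  exists2 c, Num.min (x ord0 i) t <= c <= Num.max (x ord0 i) t &
    f (set_coord x i t) - f x = df (set_coord x i c) * (t - x ord0 i).
Proof.
move=> fD; pose phi s := f (set_coord x i s).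
have phiD (s : R) : is_derive s (1 : R) phi (df (set_coord x i s)).
  have := fD (set_coord x i s); rewrite set_coord_eq.
  by under eq_fun do rewrite set_coordK.
have phi_cont a b := @derivable_within_continuous _ _ phi `[a, b]
  (fun s _ => @ex_derive _ _ _ _ _ _ _ (phiD s)).
have phix : phi (x ord0 i) = f x by rewrite /phi set_coord_id.
have [xt|tx] := lerP (x ord0 i) t.
  have [c] := MVT_segment xt (fun s _ => phiD s) (phi_cont _ _).
  by rewrite in_itv /= phix => cxt phiE; exists c; rewrite // -phiE.
have [c] := MVT_segment (ltW tx) (fun s _ => phiD s) (phi_cont _ _).
rewrite in_itv /= phix => ctx phiE; exists c => //.
by apply: oppr_inj; rewrite opprB phiE -mulrN opprB.
Qed.

Lemma box_set_coord (a b : 'rV[R]_n) x i t :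
  box a b x -> a ord0 i <= t <= b ord0 i -> box a b (set_coord x i t).
Proof. by move=> xab tab j; rewrite mxE; case: eqP => [->|_]. Qed.

Lemma box_mvt_coord f df (a b : 'rV[R]_n) i x t :
  partial_deriv i f df -> box a b x -> a ord0 i <= t <= b ord0 i ->
  exists2 y, box a b y & f (set_coord x i t) - f x = df y * (t - x ord0 i).
Proof.
move=> fD xab /andP[at_ tb]; have [c /andP[xtc cxt] ->] := partial_deriv_mvt x t fD.
exists (set_coord x i c) => //; apply: box_set_coord => //.
have /andP[ax xb] := xab i; apply/andP; split.
  by apply: le_trans xtc; rewrite le_min ax at_.
by apply: le_trans cxt _; rewrite ge_max xb tb.
Qed.

Lemma box_lipschitz_coord f df (a b : 'rV[R]_n) L i x t :
  partial_deriv i f df -> (forall y, box a b y -> `|df y| <= L) ->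
  box a b x -> a ord0 i <= t <= b ord0 i ->
  `|f (set_coord x i t) - f x| <= L * `|t - x ord0 i|.
Proof.
move=> fD dfL xab tab; have [y yab ->] := box_mvt_coord fD xab tab.
by rewrite normrM ler_wpM2r ?dfL.
Qed.

Lemma box_lipschitz f (a b : 'rV[R]_n) L :
  (forall j, exists2 df, partial_deriv j f df & forall y, box a b y -> `|df y| <= L) ->
  forall u v, box a b u -> box a b v ->
  `|f u - f v| <= L * \sum_j `|u ord0 j - v ord0 j|.
Proof.
move=> fD u v uab vab.
pose w k : 'rV[R]_n := \row_j (if (j < k)%N then u ord0 j else v ord0 j).
have wab k : box a b (w k) by move=> j; rewrite mxE; case: ifP.
suff wv k : (k <= n)%N ->
    `|f (w k) - f v| <= L * \sum_(j < n | (j < k)%N) `|u ord0 j - v ord0 j|.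
  have wn : w n = u by apply/rowP => j; rewrite mxE ltn_ord.
  by rewrite -{1}wn; have := wv n (leqnn n); under eq_bigl do rewrite ltn_ord.
elim: k => [_|k IHk kn].
  have -> : w 0%N = v by apply/rowP => j; rewrite mxE.
  by rewrite subrr normr0 big_pred0 ?mulr0.
pose o := Ordinal kn.
have wS : w k.+1 = set_coord (w k) o (u ord0 o).
  apply/rowP => j; rewrite !mxE ltnS leq_eqVlt -val_eqE /=.
  by case: (ltngtP j k) => //= jk; rewrite (_ : j = o) //; apply: val_inj.
have wo : w k ord0 o = v ord0 o by rewrite mxE ltnn.
have [df dfP dfL] := fD o.
rewrite (bigD1 o) //= mulrDr -[f (w k.+1) - f v](subrKA (f (w k))).
apply: le_trans (ler_normD _ _) _; apply: lerD.
  by rewrite wS -wo; apply: box_lipschitz_coord dfP dfL (wab k) (uab o).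
apply: le_trans (IHk (ltnW kn)) _; rewrite le_eqVlt; apply/orP; left; apply/eqP.
by congr (_ * _); apply: eq_bigl => j; rewrite ltnS -val_eqE /=; case: ltngtP.
Qed.

Lemma partial_deriv0_const f :
  (forall j, partial_deriv j f (fun=> 0)) -> forall x y, f x = f y.
Proof.
move=> fD x y; pose a := \row_j Num.min (x ord0 j) (y ord0 j).
pose b := \row_j Num.max (x ord0 j) (y ord0 j).
have xab : box a b x by move=> j; rewrite !mxE ge_min le_max !lexx.
have yab : box a b y by move=> j; rewrite !mxE ge_min le_max !lexx !orbT.
have fL j : exists2 df, partial_deriv j f df & forall z, box a b z -> `|df z| <= 0.
  by exists (fun=> 0) => // z _; rewrite normr0.
by have := box_lipschitz fL xab yab; rewrite mul0r normr_le0 subr_eq0 => /eqP.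
Qed.

End PartialDerivatives.

Section ZeroSets.
Context {R : realType} {n : nat}.
Implicit Types (f : 'rV[R]_n -> R) (q x y : 'rV[R]_n).

Definition cube q (s : R) := box q (\row_j (q ord0 j + s)).

Lemma cubeP q s x : cube q s x <-> forall j, q ord0 j <= x ord0 j <= q ord0 j + s.
Proof. by split => xQ j; have := xQ j; rewrite mxE. Qed.

Definition grid_corner K q (h : R) (c : {ffun 'I_n -> 'I_K}) : 'rV[R]_n :=
  \row_j (q ord0 j + (c j)%:R * h).

Lemma cube_grid K q s x : 0 < s -> (0 < K)%N -> cube q s x ->
  exists c : {ffun 'I_n -> 'I_K}, cube (grid_corner q (s / K%:R) c) (s / K%:R) x.
Proof.
move=> s_gt0 K_gt0 /cubeP xQ.
have /fin_all_exists[k kP] := fun j => interval_grid_cell s_gt0 K_gt0 (xQ j).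
exists [ffun j => k j]; apply/cubeP => j; rewrite mxE ffunE.
by have := kP j; rewrite -natr1 mulrDl mul1r addrA.
Qed.

Lemma grid_cube_sub K q s (c : {ffun 'I_n -> 'I_K}) : 0 <= s ->
  cube (grid_corner q (s / K%:R) c) (s / K%:R) `<=` cube q s.
Proof.
move=> s_ge0 x /cubeP xc; apply/cubeP => j; have := xc j; rewrite mxE.
have K_gt0 : (0 < K)%N by case: (c j) => k /(leq_ltn_trans (leq0n k)).
have h_ge0 : 0 <= s / K%:R by rewrite divr_ge0.
have cK : (c j)%:R * (s / K%:R) + s / K%:R <= s.
  rewrite -[X in _ + X]mul1r -mulrDl natr1 mulrCA ler_piMr //.
  by rewrite ler_pdivrMr ?ltr0n // mul1r ler_nat.
move=> /andP[lo hi]; apply/andP; split; first by rewrite (le_trans _ lo) ?lerDl ?mulr_ge0.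
by rewrite (le_trans hi) // -addrA lerD2l.
Qed.

Hypothesis n_gt0 : (0 < n)%N.

Lemma slab_box (A : set 'rV[R]_n) i C (lo hi : 'rV[R]_n) :
  0 <= C -> (forall j, lo ord0 j <= hi ord0 j) ->
  (forall x y, A x -> A y ->
     `|x ord0 i - y ord0 i| <= C * \sum_(j | j != i) `|x ord0 j - y ord0 j|) ->
  exists a b : 'rV[R]_n, [/\ forall j, a ord0 j <= b ord0 j,
    box_vol a b <= 2 * C * (\sum_(j | j != i) (hi ord0 j - lo ord0 j))
                     * \prod_(j | j != i) (hi ord0 j - lo ord0 j) &
    forall x, A x -> (forall j, j != i -> lo ord0 j <= x ord0 j <= hi ord0 j) -> box a b x].
Proof.
move=> C_ge0 lohi graphA; pose W := C * \sum_(j | j != i) (hi ord0 j - lo ord0 j).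
have W_ge0 : 0 <= W by rewrite mulr_ge0 // sumr_ge0 // => j _; rewrite subr_ge0.
pose slab x := forall j, j != i -> lo ord0 j <= x ord0 j <= hi ord0 j.
have [[p [Ap p_slab]]|no_p] := pselect (exists p, A p /\ slab p); last first.
  exists 0, 0; split=> [j||x Ax x_slab]; first by rewrite mxE.
    by rewrite (box_vol0 n_gt0) !mulr_ge0 ?sumr_ge0 ?prodr_ge0 // => j _; rewrite subr_ge0.
  by exfalso; apply: no_p; exists x.
exists (\row_j if j == i then p ord0 i - W else lo ord0 j),
       (\row_j if j == i then p ord0 i + W else hi ord0 j); split.
- by move=> j; rewrite !mxE; case: eqP => // _; rewrite lerD2l -subr_ge0 opprK addr_ge0.
- rewrite le_eqVlt; apply/orP; left; apply/eqP.
  rewrite /box_vol (bigD1 i) //= !mxE eqxx.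
  have -> : p ord0 i + W - (p ord0 i - W) = 2 * W by ring.
  rewrite /W mulrA.
  by congr (_ * _); apply: eq_bigr => j /negPf ji; rewrite !mxE ji.
move=> x Ax x_slab j; rewrite !mxE; case: eqP => [->|/eqP ji]; last exact: x_slab.
suff : `|x ord0 i - p ord0 i| <= W by rewrite ler_norml; lra.
apply: le_trans (graphA _ _ Ax Ap) _; rewrite ler_wpM2l // ler_sum // => k ki.
have /andP[? ?] := x_slab k ki; have /andP[? ?] := p_slab k ki.
by rewrite ler_norml; apply/andP; split; lra.
Qed.

Lemma sum_prod_dummy_coord K (K_gt0 : (0 < K)%N) i (W h : R) :
  \sum_(c : {ffun 'I_n -> 'I_K})
     \prod_j (if j == i then (if c j == 0 :> nat then W else 0) else h)
  = W * (h *+ K) ^+ n.-1.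
Proof.
pose F j (k : 'I_K) := if j == i then (if k == 0 :> nat then W else 0) else h.
rewrite -(bigA_distr_bigA F) (bigD1 i) //= /F eqxx (bigD1 (Ordinal K_gt0)) //= big1 ?addr0.
  under eq_bigr => j /negPf -> do rewrite sumr_const card_ord.
  by rewrite prodr_const cardC1 card_ord.
by move=> k k0; rewrite ifN //; apply: contra k0 => /eqP k0; apply/eqP/val_inj.
Qed.

Lemma lebesgue_null_lipschitz_graph (A : set 'rV[R]_n) q s C i :
  0 < s -> 0 <= C -> A `<=` cube q s ->
  (forall x y, A x -> A y ->
     `|x ord0 i - y ord0 i| <= C * \sum_(j | j != i) `|x ord0 j - y ord0 j|) ->
  lebesgue_null A.
Proof.
move=> s_gt0 C_ge0 AQ graphA eps eps_gt0.
pose X := 2 * C * (\sum_(j | j != i) s) * s ^+ n.-1.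
have [K [K_gt0 XK]] := exists_nat_div_le X eps_gt0.
pose h := s / K%:R; have h_gt0 : 0 < h by rewrite divr_gt0 ?ltr0n.
(* Cells have mesh [h] in the coordinates [j != i]; the [i]-th index of a cell is
   a dummy, only cells with [c i = 0] carry a box, of height [W] in direction [i]. *)
pose W := 2 * C * \sum_(j | j != i) h.
pose g j (k : 'I_K) := if j == i then (if k == 0 :> nat then W else 0) else h.
pose lo (c : {ffun 'I_n -> 'I_K}) := grid_corner q h c.
pose hi (c : {ffun 'I_n -> 'I_K}) := \row_j (lo c ord0 j + h).
have hi_lo c j : hi c ord0 j - lo c ord0 j = h by rewrite mxE addrC addKr.
have /choice[ab abP] : forall c : {ffun 'I_n -> 'I_K},
    exists ab : 'rV[R]_n * 'rV[R]_n,
    [/\ forall j, ab.1 ord0 j <= ab.2 ord0 j, box_vol ab.1 ab.2 <= \prod_j g j (c j) &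
        c i = 0 :> nat -> forall x, A x ->
        (forall j, j != i -> lo c ord0 j <= x ord0 j <= hi c ord0 j) -> box ab.1 ab.2 x].
  move=> c; rewrite (bigD1 i) //= {1}/g eqxx.
  under eq_bigr => j /negPf ji do rewrite /g ji.
  have [ci0|ci0] := eqVneq (c i : nat) 0%N; last first.
    exists (0, 0); split=> [j||/eqP]; rewrite ?mxE ?(negPf ci0) ?mul0r ?box_vol0 //.
  have lohi j : lo c ord0 j <= hi c ord0 j by rewrite -subr_ge0 hi_lo ltW.
  have [a [b [ab vol_le cov]]] := slab_box C_ge0 lohi graphA.
  exists (a, b); split => //; apply: le_trans vol_le _.
  rewrite (eq_bigr (fun=> h) (fun j _ => hi_lo c j)).
  by rewrite [X in _ * X](eq_bigr (fun=> h) (fun j _ => hi_lo c j)).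
apply: (boxes_cover_fin n_gt0 (a := fun c => (ab c).1) (b := fun c => (ab c).2)).
- by move=> c; case: (abP c).
- move=> x Ax; have [c xc] := cube_grid s_gt0 K_gt0 (AQ _ Ax).
  pose c' := [ffun j => if j == i then Ordinal K_gt0 else c j].
  exists c' => //; have [_ _ cov] := abP c'; apply: cov => //; first by rewrite ffunE eqxx.
  move=> j /negPf ji; have /cubeP/(_ j) := xc.
  by rewrite /hi /lo !mxE ffunE ji.
have vol_le c : box_vol (ab c).1 (ab c).2 <= \prod_j g j (c j) by case: (abP c).
apply: le_trans XK; apply: le_trans (ler_sum _ (fun c _ => vol_le c)) _.
rewrite /g (sum_prod_dummy_coord K_gt0).
have -> : h *+ K = s by rewrite /h -mulr_natr divfK ?pnatr_eq0 -?lt0n.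
rewrite /W /X /h -mulr_suml le_eqVlt; apply/orP; left.
by apply/eqP; field; rewrite pnatr_eq0 -lt0n.
Qed.

Lemma lebesgue_null_zero_set_cube f (df : 'I_n -> 'rV[R]_n -> R) i q s L c :
  0 < s -> 0 < c -> (forall j, partial_deriv j f (df j)) ->
  (forall j y, cube q s y -> `|df j y| <= L) ->
  (forall y, cube q s y -> c <= `|df i y|) ->
  lebesgue_null [set x | cube q s x /\ f x = 0].
Proof.
move=> s_gt0 c_gt0 fD dfL dfi_ge.
have qQ : cube q s q by apply/cubeP => j; rewrite lexx lerDl ltW.
have L_ge0 : 0 <= L := le_trans (normr_ge0 _) (dfL i q qQ).
apply: (lebesgue_null_lipschitz_graph (q := q) (s := s) (C := L / c) (i := i)).
- by [].
- by rewrite divr_ge0 // ltW.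
- by move=> x [].
move=> x y [xQ fx0] [yQ fy0].
have yiQ := yQ i.
have zQ : cube q s (set_coord x i (y ord0 i)) by apply: box_set_coord.
have [z zQ' fzE] := box_mvt_coord (fD i) xQ yiQ.
rewrite -(ler_pM2l c_gt0) mulrA mulrCA divff ?gt_eqF // mulr1.
apply: le_trans (_ : `|f (set_coord x i (y ord0 i)) - f y| <= _).
  rewrite fy0 fx0 !subr0 in fzE *; rewrite fzE normrM distrC ler_wpM2r //.
  exact: dfi_ge.
have fL j : exists2 dg, partial_deriv j f dg & forall y, cube q s y -> `|dg y| <= L.
  by exists (df j) => //; apply: dfL.
apply: le_trans (box_lipschitz fL zQ yQ) _.
rewrite ler_wpM2l // (bigD1 i) //= set_coord_eq subrr normr0 add0r le_eqVlt.
by apply/orP; left; apply/eqP/eq_bigr => j ji; rewrite set_coord_neq.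
Qed.

Lemma cube_dist q s x y j : cube q s x -> cube q s y -> `|x ord0 j - y ord0 j| <= s.
Proof.
move=> /cubeP/(_ j)/andP[? ?] /cubeP/(_ j)/andP[? ?].
by rewrite ler_norml; apply/andP; split; lra.
Qed.

Lemma lebesgue_null_deriv_ge f (df : 'I_n -> 'rV[R]_n -> R) d i q s del :
  0 < s -> 0 < del -> (forall j, polyfun d (df j) /\ partial_deriv j f (df j)) ->
  lebesgue_null [set x | cube q s x /\ f x = 0 /\ del <= `|df i x|].
Proof.
move=> s_gt0 del_gt0 dfP; set Z := [set x | _].
have [L dfL] := polyfun_family_bounded q (\row_j (q ord0 j + s)) (fun j => (dfP j).1).
have [ddf ddfP] := fin_all_exists (fun j => polyfun_partial_deriv j (polyfunS (dfP i).1)).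
have [L' ddfL] := polyfun_family_bounded q (\row_j (q ord0 j + s)) (fun j => (ddfP j).1).
have [K [K_gt0 KL']] := exists_nat_div_le (L' * (n%:R * s)) (divr_gt0 del_gt0 (ltr0n _ 2)).
pose h := s / K%:R; have h_gt0 : 0 < h by rewrite divr_gt0 ?ltr0n.
pose cell (c : {ffun 'I_n -> 'I_K}) := cube (grid_corner q h c) h.
apply: (lebesgue_nullS (B := \bigcup_c (Z `&` cell c))).
  by move=> x Zx; have [c xc] := cube_grid s_gt0 K_gt0 Zx.1; exists c => //; split.
apply: (lebesgue_null_bigcup n_gt0) => c.
have [[p [Zp pc]]|no_p] := pselect (exists p, Z p /\ cell c p); last first.
  by apply: lebesgue_nullS (lebesgue_null0 n_gt0) => x [Zx xc]; apply: no_p; exists x.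
have cellQ : cell c `<=` cube q s by apply: grid_cube_sub; rewrite ltW.
have dfi_ge y : cell c y -> del / 2 <= `|df i y|.
  move=> yc; have pQ := cellQ _ pc; have yQ := cellQ _ yc.
  have L'_ge0 : 0 <= L' := le_trans (normr_ge0 _) (ddfL i p pQ).
  have dfiL j : exists2 g, partial_deriv j (df i) g & forall z, cube q s z -> `|g z| <= L'.
    by exists (ddf j); [exact: (ddfP j).2 | exact: ddfL].
  have dist_py : \sum_j `|p ord0 j - y ord0 j| <= n%:R * h.
    apply: le_trans (ler_sum _ (fun j _ => cube_dist j pc yc)) _.
    by rewrite sumr_const card_ord mulr_natl.
  have lip := le_trans (box_lipschitz dfiL pQ yQ) (ler_wpM2l L'_ge0 dist_py).
  have hK : L' * (n%:R * h) <= del / 2 by move: KL'; rewrite /h !mulrA.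
  have := ler_normD (df i y) (df i p - df i y); rewrite addrC subrK.
  have := Zp.2.2; lra.
apply: (lebesgue_nullS (B := [set x | cell c x /\ f x = 0])); first by move=> x [[_ []]].
apply: lebesgue_null_zero_set_cube (fun j => (dfP j).2) _ dfi_ge.
- exact: h_gt0.
- by rewrite divr_gt0.
- by move=> j y /cellQ; apply: dfL.
Qed.

Lemma lebesgue_null_polyfun_zero d f : polyfun d f -> (exists x0, f x0 != 0) ->
  lebesgue_null [set x | f x = 0].
Proof.
elim: d f => [|d IHd] f fP [x0 fx0].
  case: fP => c fE; apply: lebesgue_nullS (lebesgue_null0 n_gt0) => x /= fx.
  by move: fx0; rewrite fE -(fE x) fx eqxx.
have /fin_all_exists[df dfP] := fun j => polyfun_partial_deriv j fP.
have [[i [y dfiy]]|df0] := pselect (exists i y, df i y != 0); last first.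
  have df_eq0 j y : df j y = 0 by apply/eqP; apply: contra_notT df0 => dfy; exists j, y.
  have fD0 j : partial_deriv j f (fun=> 0).
    by apply: partial_deriv_ext (dfP j).2 _ _ => // z; rewrite df_eq0.
  apply: lebesgue_nullS (lebesgue_null0 n_gt0) => x /= fx.
  by move: fx0; rewrite (partial_deriv0_const fD0 x0 x) fx eqxx.
pose Zm (m : nat) := [set x | cube (\row_j (- m.+1%:R)) (2 * m.+1%:R) x /\ f x = 0 /\
                              m.+1%:R^-1 <= `|df i x|].
apply: (lebesgue_nullS (B := [set x | df i x = 0] `|` \bigcup_m Zm m)).
  move=> x /= fx; have [dfix0|dfix] := eqVneq (df i x) 0; [by left | right].
  have [m Xm] := exists_nat_ge (\sum_j `|x ord0 j| + `|df i x|^-1).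
  exists m => //; split; [apply/cubeP => j|split => //].
    have : `|x ord0 j| <= m%:R.
      apply: le_trans _ Xm; rewrite (bigD1 j) //= -addrA lerDl.
      by rewrite addr_ge0 ?sumr_ge0 ?invr_ge0.
    by rewrite mxE ler_norml -natr1 => /andP[? ?]; apply/andP; split; lra.
  rewrite -[leRHS]invrK lef_pV2 ?posrE ?invr_gt0 ?normr_gt0 ?ltr0n //.
  apply: le_trans (le_trans _ Xm) _; first by rewrite lerDr sumr_ge0.
  by rewrite ler_nat.
apply: (lebesgue_nullU n_gt0); first exact: IHd (dfP i).1 (ex_intro _ y dfiy).
apply: (lebesgue_null_bigcup n_gt0) => m.
by apply: lebesgue_null_deriv_ge dfP; rewrite ?invr_gt0 ?mulr_gt0 ?ltr0n.
Qed.

End ZeroSets.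

Lemma exists_common_nonzero {R : realType} {n : nat} (S : set 'rV[R]_n)
    (f g : 'rV[R]_n -> R) :
  (0 < n)%N -> (0 < lebesgue_outer S)%E -> is_polyfun f -> is_polyfun g ->
  (exists x, f x != 0) -> (exists x, g x != 0) -> exists2 x, S x & f x != 0 /\ g x != 0.
Proof.
move=> n_gt0 S_pos [d fP] [d' gP] f_nz g_nz; apply: contrapT => no_common.
suff /lebesgue_null_outer : lebesgue_null S by rewrite leNgt S_pos.
have fgZ := lebesgue_nullU n_gt0 (lebesgue_null_polyfun_zero n_gt0 fP f_nz)
  (lebesgue_null_polyfun_zero n_gt0 gP g_nz).
apply: lebesgue_nullS fgZ => x Sx /=.
have [fx0|fx0] := eqVneq (f x) 0; [by left | have [gx0|gx0] := eqVneq (g x) 0].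
  by right.
by case: no_common; exists x.
Qed.

Section Minors.
Variables (F : fieldType) (m n : nat).

Definition minor r (f : 'I_r -> 'I_m) (g : 'I_r -> 'I_n) (M : 'M[F]_(m, n)) :=
  \det (mxsub f g M).

Lemma minor_rank r (f : 'I_r -> 'I_m) (g : 'I_r -> 'I_n) (M : 'M[F]_(m, n)) :
  minor f g M != 0 -> (r <= \rank M)%N.
Proof.
rewrite -unitfE -unitmxE => /mxrank_unit <-.
have -> : mxsub f g M = rowsub f (rowsub g M^T)^T by apply/matrixP => i j; rewrite !mxE.
apply: leq_trans (mxrankS (rowsub_sub f _)) _.
by rewrite mxrank_tr -[leqRHS]mxrank_tr mxrankS ?rowsub_sub.
Qed.

Lemma exists_minor_rank (M : 'M[F]_(m, n)) :
  exists (f : 'I_(\rank M) -> 'I_m) (g : 'I_(\rank M) -> 'I_n), minor f g M != 0.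
Proof.
pose B := rowsub (maxrankfun M) M.
have BT_full : row_full B^T by rewrite /row_full mxrank_tr; apply: maxrowsub_free.
exists (maxrankfun M), (fullrankfun BT_full).
have -> : minor (maxrankfun M) (fullrankfun BT_full) M =
    \det (rowsub (fullrankfun BT_full) B^T).
  by rewrite /minor -det_tr; congr (\det _); apply/matrixP => i j; rewrite !mxE.
by rewrite -unitfE -unitmxE fullrowsub_unit.
Qed.

End Minors.

Lemma is_polyfun_minor (R : realType) n N m r (P : 'M[mpoly.mpoly n R]_(N, m))
    (f : 'I_r -> 'I_N) (g : 'I_r -> 'I_m) :
  is_polyfun (fun xi => minor f g (polymx_eval P xi)).
Proof.
apply: (@is_polyfun_ext _ _ (fun xi => \sum_(s : 'S_r) (-1) ^+ s *
    \prod_i mpoly.meval (fun j => xi ord0 j) (P (f i) (g (s i))))).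
  apply: is_polyfun_sum => s; apply: is_polyfun_mul; first exact: is_polyfun_cst.
  by apply: is_polyfun_prod => i; apply: is_polyfun_meval.
by move=> xi; apply: eq_bigr => s _; congr (_ * _); apply: eq_bigr => i _; rewrite !mxE.
Qed.

Lemma exists_argmax_nat (T : Type) (S : set T) (h : T -> nat) B :
  (exists x, S x) -> (forall x, S x -> (h x <= B)%N) ->
  exists2 x, S x & forall y, S y -> (h y <= h x)%N.
Proof.
move=> [x0 Sx0] hB.
have exP : exists k, `[< exists2 x, S x & h x = k >].
  by exists (h x0); apply/asboolP; exists x0.
have ubP k : `[< exists2 x, S x & h x = k >] -> (k <= B)%N.
  by move=> /asboolP[x Sx <-]; apply: hB.
case: (ex_maxnP exP ubP) => k /asboolP[x Sx hx] kmax.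
by exists x => // y Sy; rewrite hx; apply: kmax; apply/asboolP; exists y.
Qed.

Unset Implicit Arguments.

Theorem lemma2p2 (R : realType) (n N1 m1 N2 m2 : nat)
    (S : set 'rV[R]_n)
    (P : 'M[mpoly.mpoly n R]_(N1, m1)) (Q : 'M[mpoly.mpoly n R]_(N2, m2)) :
  (0 < lebesgue_outer S)%E ->
  (exists s : nat, forall xi, S xi -> (polymx_rank P xi + polymx_rank Q xi)%N = s) ->
  (exists rP : nat, forall xi, S xi -> polymx_rank P xi = rP) /\
  (exists rQ : nat, forall xi, S xi -> polymx_rank Q xi = rQ).
Proof.
move=> S_pos [s rank_sum].
have [[x0 Sx0]|S_empty] := pselect (exists xi, S xi); last first.
  by split; exists 0%N => xi Sxi; case: S_empty; exists xi.
case: n S P Q S_pos rank_sum x0 Sx0 => [|n] S P Q S_pos rank_sum x0 Sx0.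
  split; [exists (polymx_rank P x0) | exists (polymx_rank Q x0)] => xi _;
    by rewrite (thinmx0 xi) (thinmx0 x0).
have [xP SxP maxP] := exists_argmax_nat (h := polymx_rank P) (ex_intro _ x0 Sx0)
  (fun xi _ => rank_leq_row _).
have [xQ SxQ maxQ] := exists_argmax_nat (h := polymx_rank Q) (ex_intro _ x0 Sx0)
  (fun xi _ => rank_leq_row _).
have [fP [gP minorP]] := exists_minor_rank (polymx_eval P xP).
have [fQ [gQ minorQ]] := exists_minor_rank (polymx_eval Q xQ).
have [x1 Sx1 [minorP1 minorQ1]] := exists_common_nonzero (ltn0Sn n) S_pos
  (is_polyfun_minor P fP gP) (is_polyfun_minor Q fQ gQ)
  (ex_intro _ xP minorP) (ex_intro _ xQ minorQ).
have rankP1 : polymx_rank P x1 = polymx_rank P xP.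
  by apply/anti_leq; rewrite maxP //= (minor_rank minorP1).
have rankQ1 : polymx_rank Q x1 = polymx_rank Q xQ.
  by apply/anti_leq; rewrite maxQ //= (minor_rank minorQ1).
have := rank_sum x1 Sx1; rewrite rankP1 rankQ1 => rank_sum_max.
split; [exists (polymx_rank P xP) | exists (polymx_rank Q xQ)] => xi Sxi;
  by have := rank_sum xi Sxi; have := maxP xi Sxi; have := maxQ xi Sxi; lia.
Qed.
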